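(* (Correctness) In the TeeRollup protocol described in the context, malicious sequencers cannot upload an invalid state that is accepted by the TeeRollup smart contract (TSC); that is, whenever the TSC's latest recorded state is $st_h$ and it accepts a new state $st_{h+1}$ with transaction list $txs_{h+1}$, then $st_{h+1} = execute(st_h, txs_{h+1})$.
   Context: TeeRollup is a rollup protocol on a main chain with finality and smart contracts. There are $n$ sequencers $p_1,\dots,p_n$, each equipped with a TEE enclave $\eta_i$ holding a key pair $(pk_i,sk_i)$ whose public keys are registered on-chain; at most $f$ of these TEEs are compromised (for a compromised TEE the adversary knows $sk_i$ and can sign arbitrary messages), and the remaining TEEs are uncompromised. Any sequencer may be malicious (Byzantine); malicious sequencers fully control the inputs and outputs of their enclaves. Rollup states form a chain: a state at height $h$ is $st_h = \langle h, H(st_{h-1}), R_h, H(txs_h)\rangle$, where $H$ is a secure (collision-resistant) hash function, $R_h$ is the Merkle root of the account tree (addresses and balances) and $txs_h$ is the batch of transactions executed to produce $st_h$; the state transition is $st_{h+1} \leftarrow execute(st_h, txs_{h+1})$. An uncompromised enclave, given an input state $s$ and a batch $txs$, runs the fixed protocol program: it outputs the state $execute(s,txs)$, whose previous-hash field is $H(s)$, and signs (with $sk_i$) only states produced this way. A quorum certificate (QC) for a state is a set of valid signatures on its hash from at least $f+1$ distinct registered sequencers. The TSC records the latest accepted state $st_h$ and accepts a submitted state $S$ only if $S$ has height $h+1$, the previous-hash field of $S$ equals $H(st_h)$, and $S$ comes with a valid QC. A state is invalid if it is not the result of executing its transaction list on the latest recorded state. *)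

From Stdlib Require List.
From mathcomp Require Import all_boot.
Set Implicit Arguments. Unset Strict Implicit. Unset Printing Implicit Defensive.

(* A rollup state st_h = < h, H(st_{h-1}), R_h, H(txs_h) >. *)
Record rstate (Digest Root : Type) := RState {
  st_height : nat;
  st_prev   : Digest;
  st_root   : Root;
  st_txs    : Digest }.

Definition execute (Digest Root Tx : Type)
  (H : rstate Digest Root -> Digest) (Htxs : seq Tx -> Digest)
  (apply_root : Root -> seq Tx -> Root)
  (s : rstate Digest Root) (txs : seq Tx) : rstate Digest Root :=
  RState (st_height s).+1 (H s) (apply_root (st_root s) txs) (Htxs txs).

Definition valid_QC (n f : nat) (PK Sig Digest : Type)
  (verify : PK -> Digest -> Sig -> Prop) (pk : 'I_n -> PK)
  (d : Digest) (qc : seq ('I_n * Sig)) : Prop :=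
  uniq (map fst qc) /\ f.+1 <= size qc /\
  (forall p, List.In p qc -> verify (pk p.1) d p.2).

Definition tsc_accepts (n f : nat) (PK Sig Digest Root : Type)
  (verify : PK -> Digest -> Sig -> Prop) (pk : 'I_n -> PK)
  (H : rstate Digest Root -> Digest)
  (latest S : rstate Digest Root) (qc : seq ('I_n * Sig)) : Prop :=
  st_height S = (st_height latest).+1 /\
  st_prev S = H latest /\
  valid_QC f verify pk (H S) qc.

From mathcomp Require Import all_boot.

Set Implicit Arguments.
Unset Strict Implicit.
Unset Printing Implicit Defensive.

(* A certificate carries f+1 signatures from distinct sequencers while at most
   f TEEs are compromised, so some signer is honest.  Its enclave signed the
   certified digest, hence the certified state is [execute s t] for some s, t;
   the TSC's previous-hash check and collision resistance force s to be the
   latest recorded state, and the transaction hash forces t = txs. *)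

Lemma uniq_card_notin (T : finType) (A : {pred T}) (s : seq T) :
  uniq s -> #|A| < size s -> exists2 x, x \in s & x \notin A.
Proof.
move=> /card_uniqP s_card A_small; apply/exists_inP; apply: contraLR A_small.
rewrite negb_exists_in -leqNgt -s_card => /forall_inP s_in_A.
by apply/subset_leq_card/subsetP => x /s_in_A /negbNE.
Qed.

Lemma map_fst_In (T : eqType) (U : Type) (x : T) (s : seq (T * U)) :
  x \in map fst s -> exists2 p, List.In p s & p.1 = x.
Proof.
elim: s => [|p s IHs] //=; rewrite inE => /orP[/eqP ->|/IHs[q q_in <-]].
- by exists p; [left|].
- by exists q; [right|].
Qed.

Lemma valid_QC_honest_signer (n f : nat) (PK Sig Digest : Type)
    (verify : PK -> Digest -> Sig -> Prop) (pk : 'I_n -> PK)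
    (compromised : {pred 'I_n}) (d : Digest) (qc : seq ('I_n * Sig)) :
  #|compromised| <= f -> valid_QC f verify pk d qc ->
  exists2 i, ~~ compromised i & exists sg, verify (pk i) d sg.
Proof.
move=> few_compromised [signers_uniq [qc_large qc_valid]].
have [|i /map_fst_In[p p_in <-] honest] :=
  uniq_card_notin (A := compromised) signers_uniq.
  by rewrite size_map (leq_ltn_trans few_compromised qc_large).
by exists p.1 => //; exists p.2; apply: qc_valid.
Qed.

Section Execute.

Variables (Digest Root Tx : Type).
Variables (H : rstate Digest Root -> Digest) (Htxs : seq Tx -> Digest).
Variable apply_root : Root -> seq Tx -> Root.
Hypotheses (H_inj : injective H) (Htxs_inj : injective Htxs).

Lemma execute_prev_txs_eq (s latest : rstate Digest Root) (t txs : seq Tx) :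
  st_prev (execute H Htxs apply_root s t) = H latest ->
  st_txs (execute H Htxs apply_root s t) = Htxs txs ->
  execute H Htxs apply_root s t = execute H Htxs apply_root latest txs.
Proof. by move=> /H_inj -> /Htxs_inj ->. Qed.

End Execute.

Theorem theorem1
  (Digest Root Tx PK Sig : Type)
  (H : rstate Digest Root -> Digest)          (* hash of states *)
  (Htxs : seq Tx -> Digest)                   (* hash of tx batches *)
  (apply_root : Root -> seq Tx -> Root)
  (n f : nat)
  (pk : 'I_n -> PK)                           (* registered public keys *)
  (verify : PK -> Digest -> Sig -> Prop)
  (compromised : {pred 'I_n})
  (enclave_signed : 'I_n -> Digest -> Prop)   (* digests enclave i signed with sk_i *)
  (* collision resistance of H (idealized) *)
  (H_cr : injective H) (Htxs_cr : injective Htxs)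
  (* at most f TEEs are compromised *)
  (Hf : #|compromised| <= f)
  (* unforgeability: a valid signature under an uncompromised key was produced by its enclave *)
  (Hunforge : forall i d sg, ~~ compromised i -> verify (pk i) d sg -> enclave_signed i d)
  (* an uncompromised enclave only signs (hashes of) states it produced by execute *)
  (Henclave : forall i d, ~~ compromised i -> enclave_signed i d ->
     exists (s : rstate Digest Root) (txs : seq Tx),
       d = H (execute H Htxs apply_root s txs))
  (latest S : rstate Digest Root) (qc : seq ('I_n * Sig)) (txs : seq Tx) :
  tsc_accepts f verify pk H latest S qc ->
  st_txs S = Htxs txs ->
  S = execute H Htxs apply_root latest txs.
Proof.
move=> [_ [S_prev S_qc]] S_txs.
have [i honest [sg signed]] := valid_QC_honest_signer Hf S_qc.
have [s [t /H_cr S_executed]] := Henclave _ _ honest (Hunforge _ _ _ honest signed).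
rewrite S_executed in S_prev S_txs *.
exact: execute_prev_txs_eq.
Qed.
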